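(* $22 \le R(B_4,B_7) \le 23$.
   Context: For graphs $G,H$, the Ramsey number $R(G,H)$ is the smallest integer $N$ such that every red/blue coloring of the edges of $K_N$ contains a red copy of $G$ (as a subgraph, not necessarily induced) or a blue copy of $H$. The book $B_k$ is the graph on $k+2$ vertices consisting of an edge $uv$ together with $k$ further vertices, each adjacent exactly to $u$ and $v$. *)

From mathcomp Require Import all_boot.
Set Implicit Arguments. Unset Strict Implicit. Unset Printing Implicit Defensive.

(* A red/blue colouring of the edges of K_N on vertex set 'I_N:
   c x y = true means the edge xy is red, false means blue.
   Only values on pairs x != y matter; we require symmetry. *)
Definition coloring (N : nat) := 'I_N -> 'I_N -> bool.
Definition symmetric_coloring N (c : coloring N) : Prop :=
  forall x y : 'I_N, c x y = c y x.

(* A (not necessarily induced) copy of the book B_k in colour b: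
   a spine uv and k further distinct vertices (the set S, disjoint from
   {u,v}), each joined to both u and v, all these edges having colour b. *)
Definition has_mono_book N (c : coloring N) (b : bool) (k : nat) : Prop :=
  exists (u v : 'I_N) (S : {set 'I_N}),
    [/\ u != v, c u v = b, #|S| = k, u \notin S & v \notin S] /\
    (forall w, w \in S -> c u w = b /\ c v w = b).

Definition book_ramsey_prop (k l N : nat) : Prop :=
  forall c : coloring N, symmetric_coloring c ->
    has_mono_book c true k \/ has_mono_book c false l.

Definition is_book_ramsey_number (k l N : nat) : Prop :=
  book_ramsey_prop k l N /\ forall M, M < N -> ~ book_ramsey_prop k l M.

From mathcomp Require Import all_boot all_algebra all_field zify ring.
From Stdlib Require Import Classical.
Set Implicit Arguments. Unset Strict Implicit. Unset Printing Implicit Defensive.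
Import GRing.Theory Num.Theory.

(* The lower bound is an explicit colouring of K_21, checked by computation.

   For the upper bound, colour K_23 with no red B_4 and no blue B_7, and let
   r(v) and s(v) = 22 - r(v) be the red and blue degrees of v.  Summing r over
   the red neighbours and s over the blue neighbours of every v gives
   Goodman's identity
     sum_v (r^2 + s^2) = sum_v (t_red(v) + t_blue(v) + r s + r + s),
   where t(v) counts the ordered pairs (x, w) spanning a monochromatic
   triangle with v.  A red edge lies in at most 3 red triangles and a blue edge
   in at most 6 blue ones, so the right-hand side is at most
   sum_v (4 r + 7 s + r s), and r + s = 22 forces 4 r + 7 s + r s <= r^2 + s^2,
   with equality only for r = 10 or 11.  Hence all these bounds are tight, and
   since t_red(v) = 3 r(v) is even, r = 10.  The red graph is then strongly
   regular with parameters (23, 10, 3, 5): Y = A + I satisfies Y^2 = 6 I + 5 J,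
   so its eigenvalues are 11 and +-sqrt 6, which cannot add up to tr Y = 23. *)

Lemma sqr_eq_mul6_sqr (m n : nat) : n ^ 2 = 6 * m ^ 2 -> n = 0.
Proof.
(* Otherwise the 2-adic valuation would be even on the left, odd on the right. *)
move=> e; case: (posnP n) => // n_gt0; exfalso.
have m_gt0 : 0 < m.
  case: (posnP m) e => // ->; rewrite exp0n // muln0 => /eqP.
  by rewrite expn_eq0 andbT gtn_eqF.
have := congr1 (fun k => odd (logn 2 k)) e.
by rewrite /= lognM ?expn_gt0 ?m_gt0 // !lognX oddD !oddM.
Qed.

Section StronglyRegular.
Local Open Scope ring_scope.

Section Eigenvalues.
Variables (F : fieldType) (n : nat) (Y : 'M[F]_n) (a b r : F).
Let J : 'M[F]_n := const_mx 1.
Hypotheses (Y_sq : Y *m Y = a%:M + b *: J) (Y_J : Y *m J = r *: J).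

Lemma eigenvalue_sq_const z : eigenvalue Y z -> z = r \/ z ^+ 2 = a.
Proof.
move/eigenvalueP => [u Yu u_neq0].
have : (z - r) *: (u *m J) = 0.
  by rewrite scalerBl (scalemxAl z) -Yu -mulmxA Y_J scalemxAr subrr.
move/eqP; rewrite scaler_eq0 subr_eq0 => /orP [/eqP -> | /eqP uJ]; [by left | right].
have : u *m (Y *m Y) = z ^+ 2 *: u by rewrite mulmxA Yu -scalemxAl Yu scalerA expr2.
rewrite Y_sq mulmxDr -scalemxAr uJ scaler0 addr0 mul_mx_scalar => /eqP.
by rewrite -subr_eq0 -scalerBl scaler_eq0 (negbTE u_neq0) orbF subr_eq0 => /eqP.
Qed.

End Eigenvalues.

Lemma mxtrace_eigenvalues (F : closedFieldType) n (Y : 'M[F]_n) :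
  exists2 rs : seq F, (forall z, z \in rs -> eigenvalue Y z) & \tr Y = \sum_(z <- rs) z.
Proof.
have [rs char_Y] := closed_field_poly_normal (char_poly Y).
rewrite (monicP (char_poly_monic Y)) scale1r in char_Y.
exists rs => [z z_rs|]; first by rewrite eigenvalue_root_char char_Y root_prod_XsubC.
have size_rs : size rs = n.
  by have := size_char_poly Y; rewrite char_Y size_prod_XsubC => -[].
case: n Y char_Y size_rs => [|n] Y char_Y size_rs.
  by case: rs size_rs char_Y => // _ _; rewrite big_nil /mxtrace big_ord0.
apply: oppr_inj; rewrite -char_poly_trace // char_Y -coefPn_prod_XsubC size_rs //.
Qed.

Lemma sum_roots_11_sqrt6 (rs : seq algC) :
  (forall z, z \in rs -> z = 11 \/ z ^+ 2 = 6) -> \sum_(z <- rs) z != 23.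
Proof.
move=> rs_roots; pose s : algC := sqrtC 6; have s2 : s ^+ 2 = 6 by rewrite sqrtCK.
have [k [m sum_rs]] : exists (k : nat) (m : int), \sum_(z <- rs) z = k%:R * 11 + m%:~R * s.
  elim: rs rs_roots => [|z rs IH] rs_roots.
    by exists 0%N, 0; rewrite big_nil mul0r add0r mul0r.
  have rs_roots' y : y \in rs -> y = 11 \/ y ^+ 2 = 6.
    by move=> y_rs; apply: rs_roots; rewrite inE y_rs orbT.
  rewrite big_cons; have [k [m ->]] := IH rs_roots'.
  case: (rs_roots z (mem_head _ _)) => [-> | z2].
    by exists k.+1, m; rewrite mulrSr; ring.
  have : (z - s) * (z + s) == 0 by rewrite -subr_sqr z2 s2 subrr.
  rewrite mulf_eq0 subr_eq0 addr_eq0 => /orP [] /eqP ->.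
  - by exists k, (m + 1); rewrite intrD; ring.
  - by exists k, (m - 1); rewrite intrB; ring.
apply/eqP; rewrite sum_rs => /(congr1 (fun x => x - k%:R * 11)); rewrite addrAC subrr add0r.
move=> ms; have {}ms : m%:~R * s = (23 - 11 * k%:Z)%:~R.
  by rewrite ms rmorphB rmorphM /= !rmorph_nat pmulrn; ring.
have int_eq : (23 - 11 * k%:Z) ^+ 2 = 6 * m ^+ 2.
  by apply: (@intr_inj algC); rewrite !rmorphXn /= -ms rmorphM /= exprMn s2; ring.
have := @sqr_eq_mul6_sqr (absz m) (absz (23 - 11 * k%:Z)%R).
rewrite -!abszX int_eq abszM => /(_ erefl) /eqP; rewrite absz_eq0; lia.
Qed.

Lemma mxtrace_sq_6_5_neq23 n (Y : 'M[algC]_n) :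
  let J := const_mx 1 : 'M_n in Y *m Y = 6%:M + 5 *: J -> Y *m J = 11 *: J -> \tr Y != 23.
Proof.
move=> J Y_sq Y_J; have [rs rs_eig ->] := mxtrace_eigenvalues Y.
by apply: sum_roots_11_sqrt6 => z /rs_eig; exact: (eigenvalue_sq_const Y_sq Y_J).
Qed.

Lemma no_srg_23_10_3_5 (e : rel 'I_23) :
  (forall i j, e i j = e j i) -> (forall i, ~~ e i i) ->
  (forall i j, \sum_k e i k * e k j = if i == j then 10 else if e i j then 3 else 5)%N ->
  False.
Proof.
move=> e_sym e_irr e_sq.
pose J : 'M[algC]_23 := const_mx 1; pose A : 'M[algC]_23 := \matrix_(i, j) (e i j)%:R.
(* A^2 = 10 I + 3 A + 5 (J - I - A) *)
have A_sq : A *m A = 5%:M - 2 *: A + 5 *: J.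
  apply/matrixP => i j; rewrite !mxE.
  under eq_bigr => k _ do rewrite !mxE -natrM.
  rewrite -natr_sum e_sq; case: eqVneq => [<- | _].
    by rewrite (negbTE (e_irr i)) /=; ring.
  by case: (e i j) => /=; ring.
have deg_e i : (\sum_k e i k = 10)%N.
  rewrite (eq_bigr (fun k => e i k * e k i)%N) ?e_sq ?eqxx // => k _.
  by rewrite (e_sym k i) mulnb andbb.
have A_J : A *m J = 10 *: J.
  apply/matrixP => i j; rewrite !mxE.
  under eq_bigr => k _ do rewrite !mxE mulr1.
  by rewrite -natr_sum deg_e mulr1.
have Y_sq : (A + 1%:M) *m (A + 1%:M) = 6%:M + 5 *: J.
  rewrite mulmxDl !mulmxDr !mulmx1 mul1mx A_sq.
  by apply/matrixP => i j; rewrite !mxE; ring.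
have Y_J : (A + 1%:M) *m J = 11 *: J.
  by rewrite mulmxDl A_J mul1mx -[X in _ + X]scale1r -scalerDl; congr (_ *: _); ring.
have Y_tr : \tr (A + 1%:M) = 23.
  rewrite mxtraceD mxtrace1 /mxtrace big1 ?add0r // => i _.
  by rewrite mxE (negbTE (e_irr i)).
by have := mxtrace_sq_6_5_neq23 Y_sq Y_J; rewrite Y_tr eqxx.
Qed.

End StronglyRegular.

Lemma sum_sym_even n (g : 'I_n -> 'I_n -> nat) :
  (forall x y, g x y = g y x) -> (forall x, g x x = 0) ->
  ~~ odd (\sum_x \sum_y g x y).
Proof.
move=> gC g0.
pose half := \sum_x \sum_y g x y * (x < y).
have -> : \sum_x \sum_y g x y = half + \sum_x \sum_y g x y * (y < x).
  rewrite -big_split; apply: eq_bigr => x _; rewrite -big_split; apply: eq_bigr => y _.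
  by case: ltngtP => [||/val_inj->]; rewrite ?g0 /= ?muln0 ?muln1 ?addn0.
rewrite exchange_big /=.
under eq_bigr => y _ do under eq_bigr => x _ do rewrite gC.
by rewrite addnn odd_double.
Qed.

Section Colouring.
Variables (N : nat) (c : coloring N).
Hypothesis c_sym : symmetric_coloring c.

Definition mono (b : bool) (x y : 'I_N) : bool := (x != y) && (c x y == b).
Definition deg b x : nat := \sum_y mono b x y.
Definition codeg b x y : nat := \sum_w mono b x w * mono b y w.
Definition cross b x y : nat := \sum_w mono b x w * mono (~~ b) y w.
Definition tri b x : nat := \sum_y mono b x y * codeg b x y.

Lemma mono_sym b x y : mono b x y = mono b y x.
Proof. by rewrite /mono eq_sym c_sym. Qed.

Lemma mono_partition b x y : mono b x y + mono (~~ b) x y + (x == y) = 1.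
Proof. by rewrite /mono; case: eqP; case: b; case: (c x y). Qed.

Lemma monoxx b x : mono b x x = false.
Proof. by rewrite /mono eqxx. Qed.

Lemma codeg_sym b x y : codeg b x y = codeg b y x.
Proof. by apply: eq_bigr => w _; rewrite mulnC. Qed.

Lemma codeg_id b x : codeg b x x = deg b x.
Proof. by apply: eq_bigr => w _; rewrite mulnb andbb. Qed.

Lemma deg_split b x y : deg b x = codeg b x y + cross b x y + mono b x y.
Proof.
have -> : nat_of_bool (mono b x y) = \sum_w mono b x w * (y == w).
  rewrite (bigD1 y) //= eqxx muln1 big1 ?addn0 // => w.
  by rewrite eq_sym => /negbTE ->; rewrite muln0.
rewrite /deg -!big_split; apply: eq_bigr => w _ /=.
by rewrite -!mulnDr mono_partition muln1.
Qed.

Lemma deg_compl b x : deg b x + deg (~~ b) x + 1 = N.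
Proof.
have -> : N = \sum_(y : 'I_N) 1 by rewrite sum_nat_const card_ord muln1.
rewrite (eq_bigr _ (fun y _ => esym (mono_partition b x y))) !big_split /=.
congr (_ + _); rewrite (bigD1 x) //= eqxx big1 // => y.
by rewrite eq_sym => /negbTE ->.
Qed.

Lemma mono_cross b v x w :
  mono b v x * mono (~~ b) v w * (mono b x w + mono (~~ b) x w) = mono b v x * mono (~~ b) v w.
Proof.
have [<-|xw] := eqVneq x w.
  by rewrite /mono; case: (c v x); case: b; rewrite ?andbF ?muln0 ?mul0n.
have := mono_partition b x w; rewrite (negbTE xw) addn0 => ->; exact: muln1.
Qed.

Lemma cross_sum b v :
  \sum_x mono b v x * cross b x v + \sum_x mono (~~ b) v x * cross (~~ b) x v
  = deg b v * deg (~~ b) v.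
Proof.
rewrite /cross; under eq_bigr => x _ do rewrite big_distrr.
under [X in _ + X]eq_bigr => x _ do rewrite big_distrr.
rewrite [X in _ + X]exchange_big -big_split big_distrlr; apply: eq_bigr => x _.
rewrite -big_split; apply: eq_bigr => w _ /=.
rewrite -(mono_cross b v x w) negbK (mono_sym (~~ b) w x); ring.
Qed.

Lemma sum_mono_deg b v :
  \sum_x mono b v x * deg b x = tri b v + \sum_x mono b v x * cross b x v + deg b v.
Proof.
rewrite /tri [deg b v]/deg -!big_split; apply: eq_bigr => x _ /=.
rewrite (deg_split b x v) codeg_sym (mono_sym b x v) !mulnDr.
by case: (mono b v x).
Qed.

Lemma sum_mono_deg_compl b v :
  \sum_x mono b v x * deg b x + \sum_x mono (~~ b) v x * deg (~~ b) x
  = tri b v + tri (~~ b) v + deg b v * deg (~~ b) v + deg b v + deg (~~ b) v.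
Proof. rewrite !sum_mono_deg -(cross_sum b v); lia. Qed.

Lemma sum_sum_mono_deg b : \sum_v \sum_x mono b v x * deg b x = \sum_x deg b x ^ 2.
Proof.
rewrite exchange_big; apply: eq_bigr => x _ /=.
by rewrite -big_distrl /= mulnC; under eq_bigr => v _ do rewrite mono_sym.
Qed.

Lemma goodman b :
  \sum_v (deg b v ^ 2 + deg (~~ b) v ^ 2)
  = \sum_v (tri b v + tri (~~ b) v + deg b v * deg (~~ b) v + deg b v + deg (~~ b) v).
Proof.
rewrite big_split /= -!sum_sum_mono_deg -big_split /=.
by apply: eq_bigr => v _; rewrite sum_mono_deg_compl.
Qed.

Lemma tri_even b v : ~~ odd (tri b v).
Proof.
rewrite /tri /codeg; under eq_bigr => x _ do rewrite big_distrr.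
apply: sum_sym_even => [x w | x] /=.
- by rewrite (mono_sym b x w); ring.
- by rewrite monoxx /= !muln0.
Qed.

Lemma codeg_card b x y : codeg b x y = #|[set w | mono b x w && mono b y w]|.
Proof.
rewrite -sum1dep_card big_mkcond; apply: eq_bigr => w _.
by rewrite mulnb; case: (_ && _).
Qed.

Lemma codeg_lt_book b k x y :
  ~ has_mono_book c b k -> mono b x y -> codeg b x y < k.
Proof.
move=> nobook /andP [xy /eqP cxy]; rewrite ltnNge codeg_card.
apply/negP => /card_geqP [s [s_uniq s_size s_sub]]; apply: nobook.
exists x, y, [set w in s]; split; first split => //.
- by rewrite cardsE (card_uniqP s_uniq).
- by rewrite inE; apply/negP => /s_sub; rewrite inE monoxx.
- by rewrite inE; apply/negP => /s_sub; rewrite inE monoxx andbF.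
- move=> w; rewrite inE => /s_sub; rewrite inE.
  by case/andP => /andP [_ /eqP ->] /andP [_ /eqP ->].
Qed.

Lemma tri_leqif_book b k v : ~ has_mono_book c b k ->
  tri b v <= k.-1 * deg b v ?= iff [forall x, mono b v x ==> (codeg b v x == k.-1)].
Proof.
move=> nobook; rewrite /tri /deg big_distrr /=; apply: leqif_sum => x _.
case vx: (mono b v x); rewrite /= ?mul1n ?muln1 ?muln0; last exact/leqif_refl.
by apply: leqif_eq; rewrite -ltnS (ltn_predK (codeg_lt_book nobook vx)) codeg_lt_book.
Qed.

Lemma codeg_compl b v y :
  deg b v + codeg (~~ b) v y + mono (~~ b) v y = deg (~~ b) y + codeg b v y + mono b v y.
Proof.
have cross_compl : cross (~~ b) y v = cross b v y.
  by rewrite /cross negbK; apply: eq_bigr => w _; rewrite mulnC.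
rewrite (deg_split b v y) (deg_split (~~ b) y v) cross_compl.
by rewrite (codeg_sym (~~ b) y v) (mono_sym (~~ b) y v); lia.
Qed.

Lemma book_free_codeg b k :
  (forall x y, mono b x y -> codeg b x y < k) -> ~ has_mono_book c b k.
Proof.
move=> codeg_lt [x [y [S [[xy cxy S_k xS yS] S_common]]]].
have xy_b : mono b x y by rewrite /mono xy cxy eqxx.
have := codeg_lt x y xy_b; rewrite codeg_card ltnNge -S_k => /negP; apply.
apply/subset_leq_card/subsetP => w wS; have [cxw cyw] := S_common w wS.
rewrite inE /mono cxw cyw eqxx !andbT.
by apply/andP; split; [apply: contraNneq xS | apply: contraNneq yS] => ->.
Qed.

End Colouring.

Lemma quadratic_leqif_22 r s : r + s = 22 ->
  4 * r + 7 * s + r * s <= r ^ 2 + s ^ 2 ?= iff (r == 10) || (r == 11).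
Proof.
rewrite !expnS !expn0 !muln1 => rs.
have [r_le9 | [r10 | [r11 | r_ge12]]] : r <= 9 \/ r = 10 \/ r = 11 \/ 12 <= r by lia.
- have lt : 4 * r + 7 * s + r * s < r * r + s * s by rewrite (_ : s = 22 - r); [nia | lia].
  by split; [exact: ltnW | rewrite (ltn_eqF lt); lia].
- by rewrite r10 (_ : s = 12) //; lia.
- by rewrite r11 (_ : s = 11) //; lia.
- have lt : 4 * r + 7 * s + r * s < r * r + s * s by nia.
  by split; [exact: ltnW | rewrite (ltn_eqF lt); lia].
Qed.

Section BookFree23.
Variable c : coloring 23.
Hypothesis c_sym : symmetric_coloring c.
Hypothesis no_red : ~ has_mono_book c true 4.
Hypothesis no_blue : ~ has_mono_book c false 7.

Lemma book_free_23_tight v :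
  [/\ (deg c true v == 10) || (deg c true v == 11),
      [forall x, mono c true v x ==> (codeg c true v x == 3)]
    & [forall x, mono c false v x ==> (codeg c false v x == 6)]].
Proof.
pose r u := deg c true u; pose s u := deg c false u.
have bound u : tri c true u + tri c false u + (r u * s u + r u + s u) <= r u ^ 2 + s u ^ 2
   ?= iff ([forall x, mono c true u x ==> (codeg c true u x == 3)]
           && [forall x, mono c false u x ==> (codeg c false u x == 6)])
          && ((r u == 10) || (r u == 11)).
  have rs : r u + s u = 22 by have := deg_compl c true u; rewrite /r /s /=; lia.
  apply: leqif_trans (quadratic_leqif_22 rs).
  have -> : 4 * r u + 7 * s u + r u * s u
            = 3 * r u + 6 * s u + (r u * s u + r u + s u) by ring.
  have := leqif_add (leqif_add (tri_leqif_book u no_red) (tri_leqif_book u no_blue))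
                    (elimT (@leqif_refl (r u * s u + r u + s u) true) isT).
  by rewrite andbT.
(* Goodman's identity makes the summed bound an equality. *)
have /esym := (leqif_sum (fun u (_ : predT u) => bound u)).2.
have -> : \sum_u (tri c true u + tri c false u + (r u * s u + r u + s u))
          = \sum_u (r u ^ 2 + s u ^ 2).
  by rewrite (goodman c_sym true); apply: eq_bigr => u _; rewrite !addnA.
by rewrite eqxx => /forallP /(_ v) /andP [/andP [-> ->] ->].
Qed.

Lemma red_deg_10 v : deg c true v = 10.
Proof.
have [deg_v red_tight _] := book_free_23_tight v.
have := (tri_leqif_book v no_red).2; rewrite red_tight => /eqP tri_v.
by move: (tri_even c_sym true v); rewrite tri_v oddM; case/orP: deg_v => /eqP ->.
Qed.

Lemma red_codeg x y :
  codeg c true x y = if x == y then 10 else if mono c true x y then 3 else 5.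
Proof.
have [<- | xy] := eqVneq x y; first by rewrite codeg_id red_deg_10.
case xy_red: (mono c true x y).
  by have [_ /forallP /(_ y) /implyP /(_ xy_red) /eqP] := book_free_23_tight x.
have xy_blue : mono c false x y by move: xy_red; rewrite /mono xy /=; case: (c x y).
have [_ _ /forallP /(_ y) /implyP /(_ xy_blue) /eqP blue_codeg] := book_free_23_tight x.
have := codeg_compl c_sym true x y; rewrite /= blue_codeg xy_blue xy_red red_deg_10.
by have := deg_compl c true y; rewrite /= red_deg_10; lia.
Qed.

Lemma book_free_23_absurd : False.
Proof.
apply: (@no_srg_23_10_3_5 (mono c true)) => [i j | i | i j]; first exact: mono_sym.
  by rewrite monoxx.
by rewrite -red_codeg; apply: eq_bigr => k _; rewrite (mono_sym c_sym true k j).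
Qed.

End BookFree23.

Lemma book_ramsey_prop_4_7_23 : book_ramsey_prop 4 7 23.
Proof.
move=> c c_sym.
have [red | no_red] := classic (has_mono_book c true 4); first by left.
have [blue | no_blue] := classic (has_mono_book c false 7); first by right.
by case: (book_free_23_absurd c_sym no_red no_blue).
Qed.

Definition tab_colouring N (tab : nat -> nat -> bool) : coloring N := fun i j => tab i j.
Arguments tab_colouring : clear implicits.

Section TableColouring.
Variables (N : nat) (tab : nat -> nat -> bool).

Definition tab_codeg b u v : nat :=
  count (fun w => [&& u != w, tab u w == b, v != w & tab v w == b]) (iota 0 N).

Definition tab_symmetric : bool :=
  all (fun u => all (fun v => tab u v == tab v u) (iota 0 N)) (iota 0 N).

Definition tab_book_free b k : bool :=
  all (fun u => all (fun v => (u != v) && (tab u v == b) ==> (tab_codeg b u v < k))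
                    (iota 0 N)) (iota 0 N).

Lemma mem_iota_ord (i : 'I_N) : val i \in iota 0 N.
Proof. by rewrite mem_iota ltn_ord. Qed.

Lemma codeg_tab b (u v : 'I_N) : codeg (tab_colouring N tab) b u v = tab_codeg b u v.
Proof.
rewrite /codeg (eq_bigr _ (fun w _ => mulnb _ _)) -big_mkcond /=.
rewrite /tab_codeg -sum1_count.
have -> : iota 0 N = index_iota 0 N by rewrite /index_iota subn0.
rewrite big_mkord.
by apply: eq_bigl => w; rewrite /mono -!andbA.
Qed.

Lemma tab_symmetricP : tab_symmetric -> symmetric_coloring (tab_colouring N tab).
Proof.
move=> /allP sym u v; apply/eqP.
by move: (sym _ (mem_iota_ord u)) => /allP; apply; apply: mem_iota_ord.
Qed.

Lemma tab_book_freeP b k : tab_book_free b k -> ~ has_mono_book (tab_colouring N tab) b k.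
Proof.
move=> /allP free; apply: book_free_codeg => u v uv; rewrite codeg_tab.
by move: (free _ (mem_iota_ord u)) => /allP /(_ _ (mem_iota_ord v)) /implyP; apply.
Qed.

End TableColouring.

Definition red_nbrs_21 : seq (seq nat) :=
  [:: [:: 1; 2; 3; 5; 6; 15; 16; 18]; [:: 0; 2; 6; 7; 10; 11; 13; 16];
      [:: 0; 1; 5; 11; 13; 14; 18; 20]; [:: 0; 4; 5; 6; 8; 9; 18; 19];
      [:: 3; 5; 9; 10; 13; 14; 16; 19]; [:: 0; 2; 3; 4; 8; 14; 16; 17];
      [:: 0; 1; 3; 7; 8; 9; 11; 12]; [:: 1; 6; 8; 12; 13; 16; 17; 19];
      [:: 3; 5; 6; 7; 11; 17; 19; 20]; [:: 3; 4; 6; 10; 11; 12; 14; 15];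
      [:: 1; 4; 9; 11; 15; 16; 19; 20]; [:: 1; 2; 6; 8; 9; 10; 14; 20];
      [:: 6; 7; 9; 13; 14; 15; 17; 18]; [:: 1; 2; 4; 7; 12; 14; 18; 19];
      [:: 2; 4; 5; 9; 11; 12; 13; 17]; [:: 0; 9; 10; 12; 16; 17; 18; 20];
      [:: 0; 1; 4; 5; 7; 10; 15; 17]; [:: 5; 7; 8; 12; 14; 15; 16; 20];
      [:: 0; 2; 3; 12; 13; 15; 19; 20]; [:: 3; 4; 7; 8; 10; 13; 18; 20];
      [:: 2; 8; 10; 11; 15; 17; 18; 19]].

Definition tab21 (i j : nat) : bool := j \in nth [::] red_nbrs_21 i.

Lemma not_book_ramsey_prop_4_7_21 : ~ book_ramsey_prop 4 7 21.
Proof.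
have sym21 : tab_symmetric 21 tab21 by vm_compute.
have red21 : tab_book_free 21 tab21 true 4 by vm_compute.
have blue21 : tab_book_free 21 tab21 false 7 by vm_compute.
case/(_ _ (tab_symmetricP sym21)).
- exact: tab_book_freeP red21.
- exact: tab_book_freeP blue21.
Qed.

Lemma book_ramsey_prop_mono k l M M' :
  M <= M' -> book_ramsey_prop k l M -> book_ramsey_prop k l M'.
Proof.
move=> le_MM' ramsey_M c c_sym.
pose f : 'I_M -> 'I_M' := widen_ord le_MM'.
have f_inj : injective f by move=> x y /(congr1 val) /= /val_inj.
have restrict b k' : has_mono_book (fun x y => c (f x) (f y)) b k' -> has_mono_book c b k'.
  move=> [u [v [S [[uv cuv S_k uS vS] S_common]]]].
  exists (f u), (f v), (f @: S); split; last by move=> _ /imsetP [w wS ->]; apply: S_common.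
  by split; rewrite ?card_imset ?mem_imset ?(inj_eq f_inj).
have := ramsey_M (fun x y => c (f x) (f y)) (fun x y => c_sym _ _).
by case=> /restrict; [left | right].
Qed.

Theorem mainTheorem8 :
  exists N, is_book_ramsey_number 4 7 N /\ 22 <= N <= 23.
Proof.
have small M : M <= 21 -> ~ book_ramsey_prop 4 7 M.
  by move=> le_M21 /(book_ramsey_prop_mono le_M21); apply: not_book_ramsey_prop_4_7_21.
have [ramsey22 | not_ramsey22] := classic (book_ramsey_prop 4 7 22).
  by exists 22; split=> //; split=> // M; apply: small.
exists 23; split=> //; split=> [|M]; first exact: book_ramsey_prop_4_7_23.
by rewrite ltnS leq_eqVlt => /orP [/eqP -> | /small].
Qed.
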